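(* Let $T_0\in\mathcal{G}(X)$ and $T \in \mathcal{G}_{T_0}$. Let $D \subset L^2(Z|X)$ be a set with $\big\|\|f\|_{L^2(Z|X)}\big\|_{L^\infty(X)} \le 1$ for all $f\in D$, such that $D$ is dense, with respect to the $L^2(Z)$ norm, in the unit ball $\{f\in L^2(Z|X) : \|\|f\|_{L^2(Z|X)}\|_{L^\infty(X)}\le 1\}$. Suppose there is a subsequence $n_k$ such that for all $f_i, f_j \in D$, $$\lim_{k\to\infty}\big\|\mathbb{E}(T^{n_k}f_i\cdot\overline{f_j}|X) - \mathbb{E}(T_0^{n_k}f_i\cdot\overline{f_j}|X)\big\|_{L^2(X)} = 0.$$ Then $T \in \mathcal{R}_{T_0}$.
   Context: Let $(X,m)$ and $(Y,\nu)$ both be the unit interval with Lebesgue measure, and $(Z,\mu) = (X\times Y, m\times\nu)$. $\mathcal{G}(W)$ denotes the set of invertible measure-preserving transformations of a space $W$. $\mathcal{G}_{T_0} \subset \mathcal{G}(Z)$ is the set of transformations of the form $T(x,y) = (T_0x, T_x y)$ with $T_x \in \mathcal{G}(Y)$ (extensions of $T_0$); $T_0$ is identified with $T_0\times\mathrm{id}_Y$ on $Z$. For $f$ on $Z$, $T^nf = f\circ T^n$. $\mathbb{E}(\cdot|X)$ is conditional expectation onto the $\sigma$-algebra of sets $B\times Y$. $L^2(Z|X)$ is the space of $f\in L^2(Z)$ with $\|f\|_{L^2(Z|X)} := \mathbb{E}(|f|^2|X)^{1/2} \in L^\infty(X)$. $T\in\mathcal{G}_{T_0}$ is a rigid extension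 of $T_0$ if there is a subsequence $n_k$ such that for all $f,g\in L^2(Z|X)$, $\lim_{k\to\infty}\|\mathbb{E}(T^{n_k}f\cdot\overline{g}|X) - \mathbb{E}(T_0^{n_k}f\cdot\overline{g}|X)\|_{L^2(X)} = 0$; $\mathcal{R}_{T_0}$ is the set of rigid extensions. *)

From mathcomp Require Import all_boot all_order all_algebra.
From mathcomp Require Import all_classical all_reals all_analysis.
From mathcomp Require Import complex.
Import Order.TTheory GRing.Theory Num.Theory.
Set Implicit Arguments. Unset Strict Implicit. Unset Printing Implicit Defensive.
Local Open Scope ring_scope.
Local Open Scope classical_set_scope.

Section Defs.
Variable R : realType.

(* The unit interval X = Y = [0,1] with Lebesgue measure, modelled (mod 0)
   as the real line with Lebesgue measure restricted to [0,1]. *)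
Definition pt := measurableTypeR R.

Lemma measurable_unit_itv : measurable (`[0%R, 1%R]%classic : set pt).
Proof. exact: measurable_itv. Qed.

Definition mX : set pt -> \bar R := mrestr (@lebesgue_measure R) measurable_unit_itv.

Definition mZ := (mX \x mX)%E.

Definition inG d (W : measurableType d) (mu : set W -> \bar R) (S : W -> W) :=
  exists Sinv : W -> W,
    [/\ cancel S Sinv, cancel Sinv S,
        measurable_fun setT S, measurable_fun setT Sinv &
        forall A, measurable A -> mu (S @^-1` A) = mu A].

Definition GX (S : pt -> pt) := inG mX S.
Definition GZ (S : pt * pt -> pt * pt) := inG mZ S.

Definition liftX (T0 : pt -> pt) : pt * pt -> pt * pt :=
  fun z => (T0 z.1, z.2).

Definition GT0 (T0 : pt -> pt) (T : pt * pt -> pt * pt) :=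
  GZ T /\ exists Tx : pt -> pt -> pt,
    (forall x, GX (Tx x)) /\ forall x y, T (x, y) = (T0 x, Tx x y).

Definition cfun := pt * pt -> R[i].

Definition sqnorm (z : R[i]) : R := complex.Re z ^+ 2 + complex.Im z ^+ 2.

Definition cmeasurable (f : cfun) :=
  measurable_fun setT (fun z => complex.Re (f z)) /\
  measurable_fun setT (fun z => complex.Im (f z)).

Definition Tpow (T : pt * pt -> pt * pt) (n : nat) (f : cfun) : cfun :=
  fun z => f (iter n T z).

Definition cmul (f g : cfun) : cfun := fun z => f z * g z.
Definition cconj (f : cfun) : cfun := fun z => (f z)^*.

(* E(h | X)(x) = \int_Y h(x,y) dnu(y)  (conditional expectation onto the
   sigma-algebra of sets B x Y, for the product measure) *)
Definition condE (h : cfun) (x : pt) : R[i] :=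
  Complex (Rintegral mX setT (fun y => complex.Re (h (x, y))))
          (Rintegral mX setT (fun y => complex.Im (h (x, y)))).

Definition condnorm2 (f : cfun) (x : pt) : \bar R :=
  (\int[mX]_y (sqnorm (f (x, y)))%:E)%E.

Definition L2ZX (f : cfun) :=
  cmeasurable f /\ exists M : R, {ae mX, forall x, (condnorm2 f x <= M%:E)%E}.

Definition ballZX (f : cfun) :=
  L2ZX f /\ {ae mX, forall x, (condnorm2 f x <= 1%:E)%E}.

Definition distZ2 (f g : cfun) : \bar R :=
  (\int[mZ]_z (sqnorm (f z - g z))%:E)%E.

Definition distX2 (u v : pt -> R[i]) : \bar R :=
  (\int[mX]_x (sqnorm (u x - v x))%:E)%E.

Definition rigid_gap (T0 : pt -> pt) (T : pt * pt -> pt * pt) (n : nat) (f g : cfun) :=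
  distX2 (condE (cmul (Tpow T n f) (cconj g)))
         (condE (cmul (Tpow (liftX T0) n f) (cconj g))).

Definition subsequence (n : nat -> nat) := forall a b, (a < b)%N -> (n a < n b)%N.

Definition rigid_ext (T0 : pt -> pt) (T : pt * pt -> pt * pt) :=
  GT0 T0 T /\ exists n : nat -> nat, subsequence n /\
    forall f g, L2ZX f -> L2ZX g ->
      (fun k => rigid_gap T0 T (n k) f g) @ \oo --> 0%E.

End Defs.

From HB Require Import structures.
From mathcomp Require Import all_boot all_order all_algebra.
From mathcomp Require Import all_classical all_reals all_analysis.
From mathcomp Require Import measurable_realfun complex.
From mathcomp Require Import ring lra.
Import Order.TTheory GRing.Theory Num.Theory.
Set Implicit Arguments. Unset Strict Implicit. Unset Printing Implicit Defensive.
Local Open Scope ring_scope.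
Local Open Scope classical_set_scope.

(* Write A_S(f, g) = E(S^n f . conj g | X). Over a point x, A_S(f, g)(x) is the
   L^2(Y) inner product of y |-> f(S^n(x, y)) and y |-> g(x, y); as the fibre
   maps of an extension preserve nu, the first vector has norm
   ||f||_{L^2(Z|X)}(T0^n x). Sesquilinearity gives
     A(u, v) = A(u - d1, v) + A(d1, v - d2) + A(d1, d2),
   and Cauchy-Schwarz bounds the first two terms when u, v, d1, d2 lie in the
   unit ball. Comparing A_T with A_{T0} and integrating over X (T0 preserves m):
     gap(u, v) <= 5 (2 |u - d1|^2 + 2 |v - d2|^2 + gap(d1, d2)),
   which density of D makes eventually small along n_k. Arbitrary f, g in
   L^2(Z|X) are scaled into the unit ball; scaling both by c multiplies the gap
   by c^4. *)

Section ComplexParts.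
Variable R : realType.
Implicit Types (a b : R[i]) (k : R).

Lemma Re_add a b : complex.Re (a + b) = complex.Re a + complex.Re b.
Proof. by case: a; case: b. Qed.

Lemma Im_add a b : complex.Im (a + b) = complex.Im a + complex.Im b.
Proof. by case: a; case: b. Qed.

Lemma Re_sub a b : complex.Re (a - b) = complex.Re a - complex.Re b.
Proof. by case: a; case: b. Qed.

Lemma Im_sub a b : complex.Im (a - b) = complex.Im a - complex.Im b.
Proof. by case: a; case: b. Qed.

Lemma Re_mul a b :
  complex.Re (a * b) = complex.Re a * complex.Re b - complex.Im a * complex.Im b.
Proof. by case: a; case: b. Qed.

Lemma Im_mul a b :
  complex.Im (a * b) = complex.Re a * complex.Im b + complex.Im a * complex.Re b.
Proof. by case: a => a1 a2; case: b => b1 b2 /=; rewrite addrC. Qed.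

Lemma Re_conjc a : @complex.Re R a^* = complex.Re a.
Proof. by case: a. Qed.

Lemma Im_conjc a : @complex.Im R a^* = - complex.Im a.
Proof. by case: a. Qed.

Lemma Re_scale k a : complex.Re (k%:C%C * a) = k * complex.Re a.
Proof. by case: a => a1 a2 /=; rewrite mul0r subr0. Qed.

Lemma Im_scale k a : complex.Im (k%:C%C * a) = k * complex.Im a.
Proof. by case: a => a1 a2 /=; rewrite mul0r addr0. Qed.

Lemma sqnorm_ge0 a : 0 <= sqnorm a.
Proof. by rewrite addr_ge0 // sqr_ge0. Qed.

Lemma sqnorm_scale k a : sqnorm (k%:C%C * a) = k ^+ 2 * sqnorm a.
Proof. by rewrite /sqnorm Re_scale Im_scale; ring. Qed.

Lemma sqnormB_le a b : sqnorm (a - b) <= 2 * (sqnorm a + sqnorm b).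
Proof.
rewrite /sqnorm Re_sub Im_sub.
have := sqr_ge0 (complex.Re a + complex.Re b).
have := sqr_ge0 (complex.Im a + complex.Im b).
nra.
Qed.

Lemma norm_Re_mulJ_le a b : `|complex.Re (a * b^*)| <= sqnorm a + sqnorm b.
Proof.
rewrite Re_mul Re_conjc Im_conjc /sqnorm ler_norml.
move: (complex.Re a) (complex.Im a) (complex.Re b) (complex.Im b) => a1 a2 b1 b2.
have := sqr_ge0 (a1 - b1); have := sqr_ge0 (a1 + b1).
have := sqr_ge0 (a2 - b2); have := sqr_ge0 (a2 + b2).
by move=> *; apply/andP; split; nra.
Qed.

Lemma norm_Im_mulJ_le a b : `|complex.Im (a * b^*)| <= sqnorm a + sqnorm b.
Proof.
rewrite Im_mul Re_conjc Im_conjc /sqnorm ler_norml.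
move: (complex.Re a) (complex.Im a) (complex.Re b) (complex.Im b) => a1 a2 b1 b2.
have := sqr_ge0 (a1 - b2); have := sqr_ge0 (a1 + b2).
have := sqr_ge0 (a2 - b1); have := sqr_ge0 (a2 + b1).
by move=> *; apply/andP; split; nra.
Qed.

Lemma mulJ_split (a b a' b' : R[i]) :
  a * b^* = (a - a') * b^* + a' * (b - b')^* + a' * b'^*.
Proof.
case: a => a1 a2; case: b => b1 b2; case: a' => c1 c2; case: b' => e1 e2 /=.
by congr Complex; ring.
Qed.

Lemma scale_mulJ k a b : k%:C%C * a * (k%:C%C * b)^* = (k * k)%:C%C * (a * b^*).
Proof.
case: a => a1 a2; case: b => b1 b2 /=.
by congr Complex; ring.
Qed.

Lemma sqr_sum5_le (x1 x2 x3 x4 x5 : R) :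
  (x1 + x2 + x3 + x4 + x5) ^+ 2 <=
  5 * (x1 ^+ 2 + x2 ^+ 2 + x3 ^+ 2 + x4 ^+ 2 + x5 ^+ 2).
Proof.
rewrite -subr_ge0.
have -> : 5 * (x1 ^+ 2 + x2 ^+ 2 + x3 ^+ 2 + x4 ^+ 2 + x5 ^+ 2) -
    (x1 + x2 + x3 + x4 + x5) ^+ 2 =
  (x1 - x2) ^+ 2 + (x1 - x3) ^+ 2 + (x1 - x4) ^+ 2 + (x1 - x5) ^+ 2 +
  (x2 - x3) ^+ 2 + (x2 - x4) ^+ 2 + (x2 - x5) ^+ 2 + (x3 - x4) ^+ 2 +
  (x3 - x5) ^+ 2 + (x4 - x5) ^+ 2 by ring.
by rewrite !addr_ge0 // sqr_ge0.
Qed.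

Lemma sqnorm_sum3B_le (a1 a2 a3 b1 b2 b3 : R[i]) :
  sqnorm (a1 + a2 + a3 - (b1 + b2 + b3)) <=
  5 * (sqnorm a1 + sqnorm a2 + sqnorm (a3 - b3) + sqnorm b1 + sqnorm b2).
Proof.
have e (x1 x2 x3 y1 y2 y3 : R) :
  x1 + x2 + x3 - (y1 + y2 + y3) = x1 + x2 + (x3 - y3) + - y1 + - y2 by ring.
rewrite /sqnorm !Re_sub !Im_sub !Re_add !Im_add !e.
have := sqr_sum5_le (complex.Re a1) (complex.Re a2) (complex.Re a3 - complex.Re b3)
  (- complex.Re b1) (- complex.Re b2).
have := sqr_sum5_le (complex.Im a1) (complex.Im a2) (complex.Im a3 - complex.Im b3)
  (- complex.Im b1) (- complex.Im b2).
rewrite !sqrrN; lra.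
Qed.

End ComplexParts.

Section ComplexMeasurable.
Variables (R : realType) (d : measure_display) (T : measurableType d).
Implicit Types f g : T -> R[i].

Definition cmeasurable_fun f :=
  measurable_fun setT (fun z => complex.Re (f z)) /\
  measurable_fun setT (fun z => complex.Im (f z)).

Lemma cmeasurable_funB f g : cmeasurable_fun f -> cmeasurable_fun g ->
  cmeasurable_fun (fun z => f z - g z).
Proof.
move=> [f1 f2] [g1 g2]; split => /=.
- under eq_fun do rewrite Re_sub; exact: measurable_funB.
- under eq_fun do rewrite Im_sub; exact: measurable_funB.
Qed.

Lemma cmeasurable_funM f g : cmeasurable_fun f -> cmeasurable_fun g ->
  cmeasurable_fun (fun z => f z * g z).
Proof.
move=> [f1 f2] [g1 g2]; split => /=.
- by under eq_fun do rewrite Re_mul; apply: measurable_funB; apply: measurable_funM.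
- by under eq_fun do rewrite Im_mul; apply: measurable_funD; apply: measurable_funM.
Qed.

Lemma cmeasurable_funJ f : cmeasurable_fun f -> cmeasurable_fun (fun z => (f z)^*).
Proof.
move=> [f1 f2]; split => /=; first by under eq_fun do rewrite Re_conjc.
by under eq_fun do rewrite Im_conjc; exact: measurable_funN.
Qed.

Lemma cmeasurable_funZ (k : R) f : cmeasurable_fun f ->
  cmeasurable_fun (fun z => k%:C%C * f z).
Proof.
move=> [f1 f2]; split => /=.
- by under eq_fun do rewrite Re_scale; exact: measurable_funM.
- by under eq_fun do rewrite Im_scale; exact: measurable_funM.
Qed.

Lemma measurable_sqnorm f :
  cmeasurable_fun f -> measurable_fun setT (fun z => sqnorm (f z)).
Proof. by move=> [f1 f2]; apply: measurable_funD; exact: measurable_funX. Qed.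

End ComplexMeasurable.

Lemma cmeasurable_fun_comp (R : realType) d d' (T : measurableType d)
    (T' : measurableType d') (f : T' -> R[i]) (phi : T -> T') :
  cmeasurable_fun f -> measurable_fun setT phi -> cmeasurable_fun (f \o phi).
Proof.
by move=> [f1 f2] mphi; split;
  [exact: measurableT_comp f1 mphi | exact: measurableT_comp f2 mphi].
Qed.

Lemma fine_le1 (R : numDomainType) (e : \bar R) : (e <= 1)%E -> fine e <= 1.
Proof. by case: e => [r||] //; rewrite lee_fin. Qed.

Lemma le1_ltry (R : realDomainType) (e : \bar R) : (e <= 1 -> e < +oo)%E.
Proof. by move=> e1; exact: le_lt_trans e1 (ltry 1). Qed.

Lemma nneseq_cvg0 (R : realType) (w : nat -> \bar R) : (forall k, 0 <= w k)%E ->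
  (forall e : R, 0 < e -> \forall k \near \oo, (w k <= e%:E)%E) -> w @ \oo --> 0%E.
Proof.
move=> w0 small; apply/fine_cvgP; split.
  apply: filterS (small 1 ltr01) => k wk1.
  by rewrite ge0_fin_numE // (le_lt_trans wk1 (ltry _)).
apply/cvgrPdist_le => e e0; apply: filterS (small e e0) => k wke.
rewrite /= sub0r normrN; move: (w0 k) wke.
by case: (w k) => [r| |] //=; rewrite !lee_fin => r0 re; rewrite ger0_norm.
Qed.

Lemma measurable_iter d (T : measurableType d) (U : T -> T) n :
  measurable_fun setT U -> measurable_fun setT (iter n U).
Proof.
move=> mU; elim: n => [|n IH] /=; first exact: measurable_id.
exact: measurableT_comp mU IH.
Qed.

Section MeasurePreserving.
Local Open Scope ereal_scope.
Variables (R : realType) (d : measure_display) (W : measurableType d).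
Variables (mu : {measure set W -> \bar R}) (U : W -> W).
Hypothesis gU : inG mu U.

Let mU : measurable_fun setT U. Proof. by case: gU => V []. Qed.

Lemma ge0_integral_inG (psi : W -> \bar R) :
  measurable_fun setT psi -> (forall x, 0 <= psi x) ->
  \int[mu]_x psi (U x) = \int[mu]_x psi x.
Proof.
move=> mpsi psi0.
have := ge0_integral_pushforward mU mu measurableT mpsi (fun y _ => psi0 y).
rewrite preimage_setT => <-; apply: eq_measure_integral => A mA _.
by case: gU => V [_ _ _ _ pres]; exact: pres.
Qed.

Lemma ge0_integral_iter_inG (psi : W -> \bar R) n :
  measurable_fun setT psi -> (forall x, 0 <= psi x) ->
  \int[mu]_x psi (iter n U x) = \int[mu]_x psi x.
Proof.
move=> mpsi psi0; elim: n => [//|n IH].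
under eq_integral do rewrite iterSr.
rewrite (@ge0_integral_inG (psi \o iter n U)) // => [|x]; last exact: psi0.
exact: measurableT_comp mpsi (measurable_iter n mU).
Qed.

Lemma ae_comp_iter_inG (Q : W -> Prop) n :
  {ae mu, forall x, Q x} -> {ae mu, forall x, Q (iter n U x)}.
Proof.
elim: n => [//|n IH] aeQ; have [N [mN N0 sN]] := IH aeQ.
exists (U @^-1` N); split.
- by rewrite -[X in measurable X]setTI; exact: mU.
- by case: gU => V [_ _ _ _ ->].
- by move=> x /= nQ; apply: sN; rewrite /= -iterSr.
Qed.

End MeasurePreserving.

Lemma ge0_integral_comb3 d (T : measurableType d) (R : realType)
    (mu : {measure set T -> \bar R}) (k a b : R) (f g h : T -> \bar R) :
  0 <= k -> 0 <= a -> 0 <= b ->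
  measurable_fun setT f -> measurable_fun setT g -> measurable_fun setT h ->
  (forall x, 0 <= f x)%E -> (forall x, 0 <= g x)%E -> (forall x, 0 <= h x)%E ->
  (\int[mu]_x (k%:E * (a%:E * f x + b%:E * g x + h x)) =
   k%:E * (a%:E * \int[mu]_x f x + b%:E * \int[mu]_x g x + \int[mu]_x h x))%E.
Proof.
move=> k0 a0 b0 mf mg mh f0 g0 h0.
have maf : measurable_fun setT (fun x => a%:E * f x)%E := measurable_funeM _ mf.
have mbg : measurable_fun setT (fun x => b%:E * g x)%E := measurable_funeM _ mg.
have af0 x : (0 <= a%:E * f x)%E by rewrite mule_ge0.
have bg0 x : (0 <= b%:E * g x)%E by rewrite mule_ge0.
have afbg0 x : (0 <= a%:E * f x + b%:E * g x)%E by rewrite adde_ge0.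
have mafbg := emeasurable_funD maf mbg.
rewrite (ge0_integralZl _ _ (emeasurable_funD mafbg mh)) //; last first.
  by move=> x _; rewrite adde_ge0.
rewrite (ge0_integralD _ _ (fun x _ => afbg0 x) mafbg (fun x _ => h0 x) mh) //.
rewrite (ge0_integralD _ _ (fun x _ => af0 x) maf (fun x _ => bg0 x) mbg) //.
by rewrite !ge0_integralZl.
Qed.

Lemma le_mul_of_amgm_bound (R : realFieldType) (c A B : R) :
  0 <= c -> 0 <= A -> 0 <= B ->
  (forall l, 0 < l -> 2 * c <= l * c * A + B / l) -> c <= A * B.
Proof.
move=> c0 A0 B0 amgm; have [Ap|] := ltP 0 A.
  have := amgm A^-1; rewrite invr_gt0 invrK => /(_ Ap).
  by rewrite mulrAC mulVf ?gt_eqF // mul1r; lra.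
move=> Ale0; have A_eq0 : A = 0 by apply/eqP; rewrite eq_le Ale0 A0.
subst A; rewrite mul0r leNgt; apply/negP => cp.
have l0 : 0 < (B + 1) / c by rewrite divr_gt0 //; lra.
have := amgm _ l0; rewrite mulr0 add0r invf_div.
have : B * (c / (B + 1)) <= c by rewrite mulrA ler_pdivrMr; lra.
lra.
Qed.

Lemma amgm_mulJ (R : realType) (al be l : R) (z w : R[i]) : 0 < l ->
  2 * (al * complex.Re (z * w^*) + be * complex.Im (z * w^*)) <=
  l * (al ^+ 2 + be ^+ 2) * sqnorm z + l^-1 * sqnorm w.
Proof.
move=> l0; rewrite Re_mul Im_mul Re_conjc Im_conjc /sqnorm.
set z1 := complex.Re z; set z2 := complex.Im z.
set w1 := complex.Re w; set w2 := complex.Im w.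
have -> : 2 * (al * (z1 * w1 - z2 * - w2) + be * (z1 * - w2 + z2 * w1)) =
  l * (al ^+ 2 + be ^+ 2) * (z1 ^+ 2 + z2 ^+ 2) + l^-1 * (w1 ^+ 2 + w2 ^+ 2) -
  l^-1 * ((l * (al * z1 + be * z2) - w1) ^+ 2 + (l * (al * z2 - be * z1) - w2) ^+ 2).
  by field; exact: lt0r_neq0.
rewrite lerBlDr lerDl; apply: mulr_ge0; first by rewrite invr_ge0 ltW.
by rewrite addr_ge0 // sqr_ge0.
Qed.

Section SquareIntegrable.
Local Open Scope ereal_scope.
Variables (R : realType) (d : measure_display) (T : measurableType d).
Variable mu : {measure set T -> \bar R}.

Lemma integrable_EFinZl (k : R) (f : T -> R) :
  mu.-integrable setT (EFin \o f) ->
  mu.-integrable setT (EFin \o (fun y => k * f y)%R).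
Proof. by move=> h; apply: eq_integrable (integrableZl measurableT k h). Qed.

Lemma integrable_EFinD (f g : T -> R) :
  mu.-integrable setT (EFin \o f) -> mu.-integrable setT (EFin \o g) ->
  mu.-integrable setT (EFin \o (fun y => f y + g y)%R).
Proof. by move=> hf hg; apply: eq_integrable (integrableD measurableT hf hg). Qed.

Implicit Types (h p q : T -> R[i]).

Definition cintegral h : R[i] :=
  Complex (Rintegral mu setT (fun y => complex.Re (h y)))
          (Rintegral mu setT (fun y => complex.Im (h y))).

Definition cintegrable h :=
  mu.-integrable setT (EFin \o (fun y => complex.Re (h y))) /\
  mu.-integrable setT (EFin \o (fun y => complex.Im (h y))).

Definition L2sqnorm p : \bar R := \int[mu]_y (sqnorm (p y))%:E.

Definition square_integrable p := cmeasurable_fun p /\ L2sqnorm p < +oo.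

Lemma L2sqnorm_ge0 p : 0 <= L2sqnorm p.
Proof. by apply: integral_ge0 => y _; rewrite lee_fin sqnorm_ge0. Qed.

Lemma integrable_sqnorm p : square_integrable p ->
  mu.-integrable setT (EFin \o (fun y => sqnorm (p y))).
Proof.
move=> [cp fin]; apply/integrableP; split.
  by apply/measurable_EFinP; exact: measurable_sqnorm.
rewrite (eq_integral (fun y => (sqnorm (p y))%:E)) // => y _ /=.
by rewrite ger0_norm // sqnorm_ge0.
Qed.

Lemma integrable_sqnormD p q : square_integrable p -> square_integrable q ->
  mu.-integrable setT (EFin \o (fun y => sqnorm (p y) + sqnorm (q y))%R).
Proof.
by move=> Lp Lq; apply: integrable_EFinD; exact: integrable_sqnorm.
Qed.

Lemma integrable_le_sqnormD (r : T -> R) p q :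
  square_integrable p -> square_integrable q -> measurable_fun setT r ->
  (forall y, `|r y| <= sqnorm (p y) + sqnorm (q y))%R ->
  mu.-integrable setT (EFin \o r).
Proof.
move=> Lp Lq mr le_r; apply: le_integrable (integrable_sqnormD Lp Lq) => //.
- exact/measurable_EFinP.
- by move=> y _ /=; rewrite lee_fin (le_trans (le_r y)) // ler_norm.
Qed.

Lemma cintegrable_mulJ p q : square_integrable p -> square_integrable q ->
  cintegrable (fun y => p y * (q y)^*)%R.
Proof.
move=> Lp Lq; have [mRe mIm] := cmeasurable_funM (proj1 Lp) (cmeasurable_funJ (proj1 Lq)).
split; apply: integrable_le_sqnormD Lp Lq _ _ => // y.
- exact: norm_Re_mulJ_le.
- exact: norm_Im_mulJ_le.
Qed.

Lemma square_integrableB p q : square_integrable p -> square_integrable q ->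
  square_integrable (fun y => p y - q y)%R.
Proof.
move=> Lp Lq; have cpq := cmeasurable_funB (proj1 Lp) (proj1 Lq).
split => //; apply: (le_lt_trans _ (integrable_lty measurableT
  (integrableZl measurableT 2 (integrable_sqnormD Lp Lq)))).
apply: ge0_le_integral => //.
- by move=> y _; rewrite lee_fin sqnorm_ge0.
- by apply/measurable_EFinP; exact: measurable_sqnorm.
- apply: measurable_funeM; apply/measurable_EFinP.
  by apply: measurable_funD; [exact: measurable_sqnorm (proj1 Lp) |
                              exact: measurable_sqnorm (proj1 Lq)].
- by move=> y _ /=; rewrite -EFinM lee_fin sqnormB_le.
Qed.

Lemma cintegralD h1 h2 : cintegrable h1 -> cintegrable h2 ->
  cintegral (fun y => h1 y + h2 y)%R = (cintegral h1 + cintegral h2)%R.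
Proof.
move=> [a1 b1] [a2 b2]; rewrite /cintegral /=; congr Complex.
- by under eq_Rintegral do rewrite Re_add; rewrite RintegralD.
- by under eq_Rintegral do rewrite Im_add; rewrite RintegralD.
Qed.

Lemma cintegrableD h1 h2 : cintegrable h1 -> cintegrable h2 ->
  cintegrable (fun y => h1 y + h2 y)%R.
Proof.
move=> [a1 b1] [a2 b2]; split.
- by under eq_fun do rewrite Re_add; exact: integrable_EFinD.
- by under eq_fun do rewrite Im_add; exact: integrable_EFinD.
Qed.

Lemma cintegralZ (k : R) h : cintegrable h ->
  cintegral (fun y => k%:C%C * h y)%R = (k%:C%C * cintegral h)%R.
Proof.
move=> [a b]; rewrite /cintegral /=; congr Complex.
- by under eq_Rintegral do rewrite Re_scale; rewrite RintegralZl // mul0r subr0.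
- by under eq_Rintegral do rewrite Im_scale; rewrite RintegralZl // mul0r addr0.
Qed.

Lemma cauchy_schwarz p q : square_integrable p -> square_integrable q ->
  (sqnorm (cintegral (fun y => p y * (q y)^*)) <=
   fine (L2sqnorm p) * fine (L2sqnorm q))%R.
Proof.
move=> Lp Lq; have [ia ib] := cintegrable_mulJ Lp Lq.
have ip := integrable_sqnorm Lp; have iq := integrable_sqnorm Lq.
rewrite /cintegral /sqnorm /=.
set al := Rintegral mu setT (fun y => complex.Re _).
set be := Rintegral mu setT (fun y => complex.Im _).
apply: le_mul_of_amgm_bound.
- by rewrite addr_ge0 // sqr_ge0.
- by rewrite fine_ge0 // L2sqnorm_ge0.
- by rewrite fine_ge0 // L2sqnorm_ge0.
(* with c = al + i be the integral of p conj(q): 2 |c|^2 is the integral of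
   2 Re (conj(c) p conj(q)), bounded pointwise by AM-GM with weight l *)
move=> l l0.
have -> : (2 * (al ^+ 2 + be ^+ 2) = Rintegral mu setT (fun y =>
    2 * (al * complex.Re (p y * (q y)^*) + be * complex.Im (p y * (q y)^*))))%R.
  rewrite RintegralZl //; last by apply: integrable_EFinD; exact: integrable_EFinZl.
  by rewrite RintegralD ?RintegralZl //; exact: integrable_EFinZl.
have -> : (l * (al ^+ 2 + be ^+ 2) * fine (L2sqnorm p) + fine (L2sqnorm q) / l =
    Rintegral mu setT (fun y => l * (al ^+ 2 + be ^+ 2) * sqnorm (p y) +
                                l^-1 * sqnorm (q y)))%R.
  rewrite RintegralD //; try exact: integrable_EFinZl.
  by rewrite !RintegralZl // (mulrC l^-1)%R.
apply: le_Rintegral => //.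
- by apply: integrable_EFinZl; apply: integrable_EFinD; exact: integrable_EFinZl.
- by apply: integrable_EFinD; exact: integrable_EFinZl.
- by move=> y _; exact: amgm_mulJ.
Qed.

End SquareIntegrable.

Lemma mX_fin_num (R : realType) : fin_num_fun (@mX R).
Proof.
move=> A mA; rewrite ge0_fin_numE ?measure_ge0 //.
apply: le_lt_trans (_ : lebesgue_measure `[0%R, 1%R] < +oo)%E.
  by apply: le_measure; rewrite ?inE; [exact: measurableI | exact: measurable_itv |].
by rewrite lebesgue_measure_itv /=; case: ifP => _; exact: ltry.
Qed.

HB.instance Definition _ R := Measure.on (@mX R).
HB.instance Definition _ R := Measure_isFinite.Build _ _ _ (@mX R) (@mX_fin_num R).

Lemma measurable_Rintegral_section (R : realType) d1 d2 (T1 : measurableType d1)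
    (T2 : measurableType d2) (m2 : {sigma_finite_measure set T2 -> \bar R})
    (k : T1 * T2 -> R) :
  measurable_fun setT k ->
  measurable_fun setT (fun x => Rintegral m2 setT (fun y => k (x, y))).
Proof.
move=> mk; apply: measurableT_comp (fine_measurable measurableT) _.
have mkE : measurable_fun setT (fun z => (k z)%:E) by exact/measurable_EFinP.
have posE x : (\int[m2]_y (fun y => (k (x, y))%:E)^\+ y =
    fubini_F m2 (fun z => (k z)%:E)^\+ x)%E.
  by apply: eq_integral => y _; rewrite !funeposE.
have negE x : (\int[m2]_y (fun y => (k (x, y))%:E)^\- y =
    fubini_F m2 (fun z => (k z)%:E)^\- x)%E.
  by apply: eq_integral => y _; rewrite !funenegE.
under eq_fun do rewrite integralE posE negE.
by apply: emeasurable_funB; apply: measurable_fun_fubini_tonelli_F;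
  [exact: measurable_funepos | exact: funepos_ge0 |
   exact: measurable_funeneg | exact: funeneg_ge0].
Qed.

Section UnitSquare.
Variable R : realType.
Local Notation P := (pt R).
Local Notation mu := (@mX R).
Implicit Types (f g h : cfun R).

Lemma condnorm2E h x : condnorm2 h x = L2sqnorm mu (fun y => h (x, y)).
Proof. by []. Qed.

Lemma condnorm2_ge0 h x : (0 <= condnorm2 h x)%E.
Proof. exact: L2sqnorm_ge0. Qed.

Lemma measurable_condnorm2 h : cmeasurable h -> measurable_fun setT (condnorm2 h).
Proof.
move=> ch; apply: (measurable_fun_fubini_tonelli_F (fun z => (sqnorm (h z))%:E)).
- by apply/measurable_EFinP; exact: measurable_sqnorm.
- by move=> z; rewrite lee_fin sqnorm_ge0.
Qed.

Lemma distZ2E f g : cmeasurable f -> cmeasurable g ->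
  distZ2 f g = (\int[mu]_x condnorm2 (fun z => f z - g z)%R x)%E.
Proof.
move=> cf cg; rewrite /distZ2 /mZ (fubini_tonelli1 (fun z => (sqnorm (f z - g z))%:E)) //.
- by apply/measurable_EFinP; apply: measurable_sqnorm; exact: cmeasurable_funB.
- by move=> z; rewrite lee_fin sqnorm_ge0.
Qed.

Lemma cmeasurable_section h x : cmeasurable h -> cmeasurable_fun (fun y => h (x, y)).
Proof. by move=> ch; apply: cmeasurable_fun_comp ch _; exact: pair1_measurable. Qed.

Lemma square_integrable_section h x : cmeasurable h ->
  (condnorm2 h x < +oo)%E -> square_integrable mu (fun y => h (x, y)).
Proof. by move=> ch fin; split => //; exact: cmeasurable_section. Qed.

Definition extension (T0 : P -> P) (S : P * P -> P * P) :=
  measurable_fun setT S /\ exists Sx : P -> P -> P,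
    (forall x, GX (Sx x)) /\ forall x y, S (x, y) = (T0 x, Sx x y).

Lemma GT0_extension T0 T : GT0 T0 T -> extension T0 T.
Proof. by move=> [[Ti [_ _ mT _ _]] [Tx [gx eT]]]; split => //; exists Tx. Qed.

Lemma GX_id : GX (@id P).
Proof. by exists id; split => //; exact: measurable_id. Qed.

Lemma liftX_extension T0 : measurable_fun setT T0 -> extension T0 (liftX T0).
Proof.
move=> mT0; split; last by exists (fun=> id); split => // x; exact: GX_id.
apply: measurable_fun_pair; last exact: measurable_snd.
exact: measurableT_comp mT0 measurable_fst.
Qed.

Section Extension.
Variables (T0 : P -> P) (S : P * P -> P * P).
Hypothesis extS : extension T0 S.

Lemma ge0_integral_iter_extension n (Phi : P * P -> \bar R) x :
  measurable_fun setT Phi -> (forall z, 0 <= Phi z)%E ->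
  (\int[mu]_y Phi (iter n S (x, y)) = \int[mu]_y Phi (iter n T0 x, y))%E.
Proof.
have [mS [Sx [gS eS]]] := extS; move=> mPhi Phi0.
elim: n x => [//|n IH] x.
under eq_integral do rewrite iterSr eS.
rewrite (@ge0_integral_inG _ _ _ _ _ (gS x) (fun y => Phi (iter n S (T0 x, y)))).
- by rewrite IH iterSr.
- apply: measurableT_comp mPhi _; apply: measurableT_comp (measurable_iter n mS) _.
  exact: pair1_measurable.
- by move=> y; exact: Phi0.
Qed.

Lemma L2sqnorm_iter_section h n x : cmeasurable h ->
  L2sqnorm mu (fun y => h (iter n S (x, y))) = condnorm2 h (iter n T0 x).
Proof.
move=> ch; rewrite /L2sqnorm /condnorm2.
apply: (ge0_integral_iter_extension n (Phi := fun z => (sqnorm (h z))%:E)).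
- by apply/measurable_EFinP; exact: measurable_sqnorm.
- by move=> z; rewrite lee_fin sqnorm_ge0.
Qed.

Lemma square_integrable_iter_section h n x : cmeasurable h ->
  (condnorm2 h (iter n T0 x) < +oo)%E ->
  square_integrable mu (fun y => h (iter n S (x, y))).
Proof.
move=> ch fin; split; last by rewrite L2sqnorm_iter_section.
apply: cmeasurable_fun_comp ch _.
exact: measurableT_comp (measurable_iter n (proj1 extS)) (pair1_measurable x).
Qed.

End Extension.
End UnitSquare.

Section Correlation.
Variable R : realType.
Local Notation P := (pt R).
Local Notation mu := (@mX R).
Implicit Types (f g h u v : cfun R).

Definition corr (S : P * P -> P * P) n f g x : R[i] :=
  condE (cmul (Tpow S n f) (cconj g)) x.

Definition corr_gap (S1 S2 : P * P -> P * P) n f g x : R :=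
  sqnorm (corr S1 n f g x - corr S2 n f g x).

Lemma corrE S n f g x :
  corr S n f g x = cintegral mu (fun y => f (iter n S (x, y)) * (g (x, y))^*).
Proof. by []. Qed.

Lemma rigid_gapE T0 T n f g :
  rigid_gap T0 T n f g = (\int[mu]_x (corr_gap T (liftX T0) n f g x)%:E)%E.
Proof. by []. Qed.

Lemma condnorm2B_lt_pinfty f g x : cmeasurable f -> cmeasurable g ->
  (condnorm2 f x < +oo)%E -> (condnorm2 g x < +oo)%E ->
  (condnorm2 (fun z => f z - g z)%R x < +oo)%E.
Proof.
move=> cf cg ff fg; rewrite condnorm2E.
by case: (square_integrableB (square_integrable_section cf ff)
                             (square_integrable_section cg fg)).
Qed.

Lemma measurable_corr S n f g : measurable_fun setT S ->
  cmeasurable f -> cmeasurable g -> cmeasurable_fun (corr S n f g).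
Proof.
move=> mS cf cg.
have [mRe mIm] := cmeasurable_funM (cmeasurable_fun_comp cf (measurable_iter n mS))
  (cmeasurable_funJ cg).
rewrite /corr /condE /cmul /Tpow /cconj; split => /=.
- exact: (@measurable_Rintegral_section R _ _ _ _ mu
    (fun z => complex.Re (f (iter n S z) * (g z)^*)) mRe).
- exact: (@measurable_Rintegral_section R _ _ _ _ mu
    (fun z => complex.Im (f (iter n S z) * (g z)^*)) mIm).
Qed.

Lemma measurable_corr_gap S1 S2 n f g : measurable_fun setT S1 ->
  measurable_fun setT S2 -> cmeasurable f -> cmeasurable g ->
  measurable_fun setT (fun x => (corr_gap S1 S2 n f g x)%:E).
Proof.
move=> m1 m2 cf cg; apply/measurable_EFinP; apply: measurable_sqnorm.
by apply: cmeasurable_funB; apply: measurable_corr.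
Qed.

Section Extension.
Variables (T0 : P -> P) (S : P * P -> P * P).
Hypothesis extS : extension T0 S.

Lemma sqnorm_corr_le n f g x : cmeasurable f -> cmeasurable g ->
  (condnorm2 f (iter n T0 x) < +oo)%E -> (condnorm2 g x < +oo)%E ->
  sqnorm (corr S n f g x) <=
  fine (condnorm2 f (iter n T0 x)) * fine (condnorm2 g x).
Proof.
move=> cf cg ff fg; rewrite corrE -(L2sqnorm_iter_section extS n x cf) condnorm2E.
exact: cauchy_schwarz (square_integrable_iter_section extS cf ff)
                      (square_integrable_section cg fg).
Qed.

Lemma corr_decomp n u v d1 d2 x :
  cmeasurable u -> cmeasurable v -> cmeasurable d1 -> cmeasurable d2 ->
  (condnorm2 u (iter n T0 x) < +oo)%E -> (condnorm2 d1 (iter n T0 x) < +oo)%E ->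
  (condnorm2 v x < +oo)%E -> (condnorm2 d2 x < +oo)%E ->
  corr S n u v x = corr S n (fun z => u z - d1 z) v x +
                   corr S n d1 (fun z => v z - d2 z) x + corr S n d1 d2 x.
Proof.
move=> cu cv cd1 cd2 fu fd1 fv fd2.
have Lu := square_integrable_iter_section extS cu fu.
have Ld1 := square_integrable_iter_section extS cd1 fd1.
have Lv := square_integrable_section cv fv.
have Ld2 := square_integrable_section cd2 fd2.
have I1 := cintegrable_mulJ (square_integrableB Lu Ld1) Lv.
have I2 := cintegrable_mulJ Ld1 (square_integrableB Lv Ld2).
have I3 := cintegrable_mulJ Ld1 Ld2.
rewrite !corrE -!cintegralD //; last exact: cintegrableD.
by congr cintegral; apply: funext => y; exact: mulJ_split.
Qed.

End Extension.

Lemma corr_gap_le_approx (T0 : P -> P) (S1 S2 : P * P -> P * P)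
    (u v d1 d2 : cfun R) n x :
  extension T0 S1 -> extension T0 S2 ->
  cmeasurable u -> cmeasurable v -> cmeasurable d1 -> cmeasurable d2 ->
  (condnorm2 u (iter n T0 x) <= 1)%E -> (condnorm2 d1 (iter n T0 x) <= 1)%E ->
  (condnorm2 v x <= 1)%E -> (condnorm2 d2 x <= 1)%E ->
  ((corr_gap S1 S2 n u v x)%:E <=
   5%:E * (2%:E * condnorm2 (fun z => u z - d1 z)%R (iter n T0 x) +
           2%:E * condnorm2 (fun z => v z - d2 z)%R x +
           (corr_gap S1 S2 n d1 d2 x)%:E))%E.
Proof.
move=> ext1 ext2 cu cv cd1 cd2 hu hd1 hv hd2.
have cud1 := cmeasurable_funB cu cd1; have cvd2 := cmeasurable_funB cv cd2.
set A := condnorm2 _ (iter n T0 x); set B := condnorm2 _ x.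
have finA : A \is a fin_num.
  by rewrite ge0_fin_numE ?condnorm2_ge0 // condnorm2B_lt_pinfty ?le1_ltry.
have finB : B \is a fin_num.
  by rewrite ge0_fin_numE ?condnorm2_ge0 // condnorm2B_lt_pinfty ?le1_ltry.
have boundA S : extension T0 S ->
    sqnorm (corr S n (fun z => u z - d1 z) v x) <= fine A.
  move=> extS; apply: le_trans (sqnorm_corr_le extS cud1 cv _ (le1_ltry hv)) _.
    by rewrite -ge0_fin_numE ?condnorm2_ge0.
  by rewrite ler_piMr ?fine_le1 // fine_ge0 // condnorm2_ge0.
have boundB S : extension T0 S ->
    sqnorm (corr S n d1 (fun z => v z - d2 z) x) <= fine B.
  move=> extS; apply: le_trans (sqnorm_corr_le extS cd1 cvd2 (le1_ltry hd1) _) _.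
    by rewrite -ge0_fin_numE ?condnorm2_ge0.
  by rewrite ler_piMl ?fine_le1 // fine_ge0 // condnorm2_ge0.
rewrite -(fineK finA) -(fineK finB) -!EFinM lee_fin /corr_gap.
have decomp S := corr_decomp S cu cv cd1 cd2
  (le1_ltry hu) (le1_ltry hd1) (le1_ltry hv) (le1_ltry hd2).
rewrite (decomp _ ext1) (decomp _ ext2).
apply: le_trans (sqnorm_sum3B_le _ _ _ _ _ _) _.
have := boundA _ ext1; have := boundA _ ext2.
have := boundB _ ext1; have := boundB _ ext2.
lra.
Qed.

End Correlation.

Section Scaling.
Variable R : realType.
Local Notation P := (pt R).
Local Notation mu := (@mX R).
Implicit Types (f u v : cfun R) (k : R).

Definition cscale k f : cfun R := fun z => k%:C%C * f z.

Lemma cscaleK k f : k != 0 -> cscale k (cscale k^-1 f) = f.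
Proof.
move=> k0; apply: funext => z; rewrite /cscale mulrA -rmorphM /=.
by rewrite divff // mul1r.
Qed.

Lemma condnorm2_cscale k f x : cmeasurable f ->
  condnorm2 (cscale k f) x = ((k ^+ 2)%:E * condnorm2 f x)%E.
Proof.
move=> cf; rewrite /condnorm2 /cscale.
under eq_integral do rewrite sqnorm_scale EFinM.
rewrite ge0_integralZl //.
- by apply/measurable_EFinP; apply: measurable_sqnorm; exact: cmeasurable_section.
- by move=> y _; rewrite lee_fin sqnorm_ge0.
- by rewrite lee_fin sqr_ge0.
Qed.

Lemma L2ZX_cscale_ball f : L2ZX f ->
  exists2 c, 0 < c & forall k, c <= k -> ballZX (cscale k^-1 f).
Proof.
move=> [cf [M hM]]; exists (Num.max 1 M); first by rewrite lt_max ltr01.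
move=> k; rewrite ge_max => /andP[k1 kM].
have k0 : 0 < k by apply: lt_le_trans k1.
have cfk : cmeasurable (cscale k^-1 f) := cmeasurable_funZ _ cf.
have le1 : {ae mu, forall x, (condnorm2 (cscale k^-1 f) x <= 1)%E}.
  apply: filterS hM => x hx; rewrite condnorm2_cscale //.
  apply: le_trans (lee_wpmul2l _ hx) _; first by rewrite lee_fin sqr_ge0.
  rewrite -EFinM lee_fin exprVn mulrC ler_pdivrMr ?exprn_gt0 // mul1r.
  by apply: le_trans kM _; rewrite expr2 ler_peMl // ltW.
by split => //; split => //; exists 1.
Qed.

Lemma corr_cscale (T0 : P -> P) S n k u v x : extension T0 S ->
  cmeasurable u -> cmeasurable v ->
  (condnorm2 u (iter n T0 x) < +oo)%E -> (condnorm2 v x < +oo)%E ->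
  corr S n (cscale k u) (cscale k v) x = (k * k)%:C%C * corr S n u v x.
Proof.
move=> extS cu cv fu fv; rewrite !corrE -cintegralZ.
  by congr cintegral; apply: funext => y; exact: scale_mulJ.
exact: cintegrable_mulJ (square_integrable_iter_section extS cu fu)
                        (square_integrable_section cv fv).
Qed.

End Scaling.

Section RigidGap.
Variable R : realType.
Local Notation P := (pt R).
Variables (T0 : P -> P) (T : P * P -> P * P).
Hypotheses (gT0 : GX T0) (gT : GT0 T0 T).

Let mT0 : measurable_fun setT T0. Proof. by case: gT0 => T0inv []. Qed.
Let extT : extension T0 T := GT0_extension gT.
Let extL : extension T0 (liftX T0) := liftX_extension mT0.

Lemma rigid_gap_le_approx n (u v d1 d2 : cfun R) :
  ballZX u -> ballZX v -> ballZX d1 -> ballZX d2 ->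
  (rigid_gap T0 T n u v <=
   5%:E * (2%:E * distZ2 u d1 + 2%:E * distZ2 v d2 + rigid_gap T0 T n d1 d2))%E.
Proof.
move=> [[cu _] bu] [[cv _] bv] [[cd1 _] bd1] [[cd2 _] bd2].
have mud1 := measurable_condnorm2 (cmeasurable_funB cu cd1).
have mA := measurableT_comp mud1 (measurable_iter n mT0).
have mB := measurable_condnorm2 (cmeasurable_funB cv cd2).
have mC := measurable_corr_gap n (proj1 extT) (proj1 extL) cd1 cd2.
have mG := measurable_corr_gap n (proj1 extT) (proj1 extL) cu cv.
have C0 x : (0 <= (corr_gap T (liftX T0) n d1 d2 x)%:E)%E by rewrite lee_fin sqnorm_ge0.
rewrite (distZ2E cu cd1) -(ge0_integral_iter_inG gT0 n mud1 (condnorm2_ge0 _)).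
rewrite (distZ2E cv cd2) !rigid_gapE -ge0_integral_comb3 //; first last.
- by move=> x; exact: condnorm2_ge0.
- by move=> x; exact: condnorm2_ge0.
apply: ae_ge0_le_integral => //.
- by move=> x _; rewrite lee_fin sqnorm_ge0.
- by move=> x _; rewrite mule_ge0 // !adde_ge0 // mule_ge0 // condnorm2_ge0.
- apply: measurable_funeM; apply: emeasurable_funD mC.
  by apply: emeasurable_funD; exact: measurable_funeM.
have bu' := ae_comp_iter_inG gT0 n bu; have bd1' := ae_comp_iter_inG gT0 n bd1.
near=> x => _; apply: corr_gap_le_approx => //; near: x.
- exact: bu'.
- exact: bd1'.
- exact: bv.
- exact: bd2.
Unshelve. all: by end_near.
Qed.

Lemma rigid_gap_cscale_le n k (u v : cfun R) : ballZX u -> ballZX v ->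
  (rigid_gap T0 T n (cscale k u) (cscale k v) <= (k ^+ 4)%:E * rigid_gap T0 T n u v)%E.
Proof.
move=> [[cu _] bu] [[cv _] bv].
have mG : measurable_fun setT (fun x => (corr_gap T (liftX T0) n u v x)%:E) :=
  measurable_corr_gap n (proj1 extT) (proj1 extL) cu cv.
have mGk : measurable_fun setT
    (fun x => (corr_gap T (liftX T0) n (cscale k u) (cscale k v) x)%:E) :=
  measurable_corr_gap n (proj1 extT) (proj1 extL) (cmeasurable_funZ _ cu)
                      (cmeasurable_funZ _ cv).
rewrite !rigid_gapE -ge0_integralZl //; last 2 first.
- by move=> x _; rewrite lee_fin sqnorm_ge0.
- by rewrite lee_fin exprn_even_ge0.
apply: ae_ge0_le_integral => //.
- by move=> x _; rewrite lee_fin sqnorm_ge0.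
- by move=> x _; rewrite mule_ge0 // lee_fin ?sqnorm_ge0 // exprn_even_ge0.
- exact: measurable_funeM.
have bu' := ae_comp_iter_inG gT0 n bu.
near=> x => _.
have hu : (condnorm2 u (iter n T0 x) <= 1)%E by near: x.
have hv : (condnorm2 v x <= 1)%E by near: x.
rewrite /corr_gap !(corr_cscale k _ cu cv (le1_ltry hu) (le1_ltry hv)) //.
by rewrite -mulrBr sqnorm_scale -EFinM -expr2 -exprM.
Unshelve. all: by end_near.
Qed.

Lemma rigid_gap_cvg0_cscale (n : nat -> nat) k (u v : cfun R) : ballZX u -> ballZX v ->
  (fun j => rigid_gap T0 T (n j) u v) @ \oo --> 0%E ->
  (fun j => rigid_gap T0 T (n j) (cscale k u) (cscale k v)) @ \oo --> 0%E.
Proof.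
move=> bu bv /(cvgeZl (y := (k ^+ 4)%:E) isT); rewrite mule0.
apply: squeeze_cvge; last exact: cvg_cst.
near=> j; apply/andP; split; last exact: rigid_gap_cscale_le.
by apply: integral_ge0 => x _; rewrite lee_fin sqnorm_ge0.
Unshelve. all: by end_near.
Qed.

Lemma rigid_gap_cvg0_approx (n : nat -> nat) (D : set (cfun R)) (u v : cfun R) :
  (forall f, D f -> ballZX f) ->
  (forall f, ballZX f -> forall eps : R, 0 < eps ->
     exists2 d, D d & (distZ2 f d < eps%:E)%E) ->
  (forall d1 d2, D d1 -> D d2 ->
     (fun j => rigid_gap T0 T (n j) d1 d2) @ \oo --> 0%E) ->
  ballZX u -> ballZX v -> (fun j => rigid_gap T0 T (n j) u v) @ \oo --> 0%E.
Proof.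
move=> hD dense conv bu bv; apply: nneseq_cvg0.
  by move=> j; apply: integral_ge0 => x _; rewrite lee_fin sqnorm_ge0.
move=> e e0.
(* 5 (2 e/40 + 2 e/40 + e/10) = e *)
have e40 : 0 < e / 40 by rewrite divr_gt0.
have [d1 Dd1 ud1] := dense u bu _ e40; have [d2 Dd2 vd2] := dense v bv _ e40.
have e10 : 0 < e / 10 by rewrite divr_gt0.
near=> j.
have gap_d : (rigid_gap T0 T (n j) d1 d2 < (e / 10)%:E)%E.
  near: j; apply: (conv d1 d2 Dd1 Dd2 [set y | (y < (e / 10)%:E)%E]).
  exact: (@nbhs_open_ereal_lt _ 0 (fun=> e / 10) e10).
apply: le_trans (rigid_gap_le_approx (n j) bu bv (hD d1 Dd1) (hD d2 Dd2)) _.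
apply: le_trans (_ : 5%:E * (2%:E * (e / 40)%:E + 2%:E * (e / 40)%:E + (e / 10)%:E) <= _)%E.
  apply: lee_wpmul2l => //; apply: leeD; [apply: leeD|exact: ltW].
  - by apply: lee_wpmul2l => //; exact: ltW.
  - by apply: lee_wpmul2l => //; exact: ltW.
by rewrite -!EFinM lee_fin; lra.
Unshelve. all: by end_near.
Qed.

End RigidGap.

Theorem lemma4p3 (R : realType) (T0 : pt R -> pt R)
  (T : pt R * pt R -> pt R * pt R) (D : set (cfun R)) :
  GX T0 -> GT0 T0 T ->
  (forall f, D f -> ballZX f) ->
  (forall f, ballZX f -> forall eps : R, 0 < eps ->
     exists2 d, D d & (distZ2 f d < eps%:E)%E) ->
  (exists n : nat -> nat, subsequence n /\
     forall fi fj, D fi -> D fj ->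
       (fun k => rigid_gap T0 T (n k) fi fj) @ \oo --> 0%E) ->
  rigid_ext T0 T.
Proof.
move=> gT0 gT hD dense [n [sub_n conv]]; split => //; exists n; split => // f g Lf Lg.
have [cf cf0 ballf] := L2ZX_cscale_ball Lf; have [cg cg0 ballg] := L2ZX_cscale_ball Lg.
set c := Num.max cf cg.
have c0 : c != 0 by rewrite gt_eqF // lt_max cf0.
have bu : ballZX (cscale c^-1 f) by apply: ballf; rewrite le_max lexx.
have bv : ballZX (cscale c^-1 g) by apply: ballg; rewrite le_max lexx orbT.
rewrite -(cscaleK f c0) -(cscaleK g c0).
apply: rigid_gap_cvg0_cscale => //.
exact: rigid_gap_cvg0_approx dense conv bu bv.
Qed.
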